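(* Fix $w>0$. For $\rho\in(-1,1)$, let $(x,y)$ be bivariate normal with mean $(0,0)$, unit variances and correlation $\rho$, and code each real $t$ by $c(t)=0$ if $t\le -w$, $1$ if $-w<t\le 0$, $2$ if $0<t\le w$, $3$ if $t>w$. Let $I_{2,\rho,w}$ be the Fisher information about $\rho$ contained in $k$ i.i.d. observations of the pair of codes $(c(x),c(y))$ (a multinomial model with the 16 cell probabilities $P_{i,j}(\rho,w)=\Pr(c(x)=i,c(y)=j)$), i.e. $I_{2,\rho,w}=k\sum_{i,j}\frac{(\partial_\rho P_{i,j}(\rho,w))^2}{P_{i,j}(\rho,w)}$. Let $$I_{1,\rho}=2k\frac{1}{4\pi^2(1-\rho^2)}\left[\frac{1}{\frac14+\frac{\arcsin\rho}{2\pi}}+\frac{1}{\frac14-\frac{\arcsin\rho}{2\pi}}\right]$$ be the Fisher information about $\rho$ in $k$ i.i.d. observations of the signs $(\mathrm{sgn}(x),\mathrm{sgn}(y))$, and let $R_{\rho,w}=I_{2,\rho,w}/I_{1,\rho}$. Then at $\rho=0$ (equivalently, in the limit $\rho\to0$) $$R_{0,w}=[g(w)]^2,\qquad g(w)=\frac12\left[\frac{\left(1-e^{-w^2/2}\right)^2}{\Phi(w)-\frac12}+\frac{e^{-w^2}}{1-\Phi(w)}\right],$$ where $\Phi$ is the standard normal cumulative distribution function.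
   Context: $\Phi(x)=\int_{-\infty}^x\frac{1}{\sqrt{2\pi}}e^{-t^2/2}\,dt$. The ratio $R_{\rho,w}$ measures the variance reduction of the maximum likelihood estimator of $\rho$ from 2-bit coded random projections relative to the 1-bit (sign) estimator. *)

From Stdlib Require Import Reals.
From Coquelicot Require Import Coquelicot.
Open Scope R_scope.

Definition phi (t : R) : R := / sqrt (2 * PI) * exp (- t ^ 2 / 2).
Definition Phi (x : R) : R := RInt_gen phi (Rbar_locally m_infty) (Rbar_locally (Finite x)).

Definition phi2 (rho x y : R) : R :=
  / (2 * PI * sqrt (1 - rho ^ 2)) *
  exp (- (x ^ 2 - 2 * rho * x * y + y ^ 2) / (2 * (1 - rho ^ 2))).

(* The 2-bit code c(t): cell i is the interval (lo i, hi i]. *)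
Definition code_lo (w : R) (i : nat) : Rbar :=
  match i with 0%nat => m_infty | 1%nat => Finite (- w) | 2%nat => Finite 0 | _ => Finite w end.
Definition code_hi (w : R) (i : nat) : Rbar :=
  match i with 0%nat => Finite (- w) | 1%nat => Finite 0 | 2%nat => Finite w | _ => p_infty end.

Definition Pcell (w rho : R) (i j : nat) : R :=
  RInt_gen (fun x => RInt_gen (fun y => phi2 rho x y)
                       (Rbar_locally (code_lo w j)) (Rbar_locally (code_hi w j)))
           (Rbar_locally (code_lo w i)) (Rbar_locally (code_hi w i)).

Definition I2 (k : nat) (w rho : R) : R :=
  INR k * sum_f_R0 (fun i => sum_f_R0 (fun j =>
     (Derive (fun r => Pcell w r i j) rho) ^ 2 / Pcell w rho i j) 3) 3.

Definition I1 (k : nat) (rho : R) : R :=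
  2 * INR k * (1 / (4 * PI ^ 2 * (1 - rho ^ 2))) *
  (1 / (1/4 + asin rho / (2 * PI)) + 1 / (1/4 - asin rho / (2 * PI))).

Definition Rratio (k : nat) (w rho : R) : R := I2 k w rho / I1 k rho.

Definition g (w : R) : R :=
  1/2 * ((1 - exp (- w ^ 2 / 2)) ^ 2 / (Phi w - 1/2) + exp (- w ^ 2) / (1 - Phi w)).

(* At rho = 0 the density of (x, y) factorizes, so P_ij(0) = p_i p_j, where p_i is the normal
   mass of the i-th code cell (lo_i, hi_i].  Writing the density of y given x as a normal density
   with mean rho x and variance 1 - rho^2 and expanding its cdf to first order in rho, with a
   remainder O(rho^2 (1 + |x|)^2) that stays O(rho^2) after integration against phi(x), gives
   dP_ij/drho (0) = d_i d_j with d_i = phi(lo_i) - phi(hi_i).  The Fisher sum therefore factors as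
   (sum_i d_i^2 / p_i)^2 = (2 g(w) / pi)^2, while I_1 at rho = 0 equals 4 k / pi^2.

   The normalisation of phi comes from the identity
   (int_0^t e^{-x^2/2})^2 + 2 int_0^1 e^{-t^2 (1+s^2)/2} / (1+s^2) ds = pi/2, whose left side has
   zero derivative; improper integrals exist because every integrand is dominated by K / (1 + x^2),
   whose primitive K atan converges at both ends. *)

From Stdlib Require Import Reals Lra Psatz FunctionalExtensionality Lia.
From Coquelicot Require Import Coquelicot.
Open Scope R_scope.

Lemma ex_RInt_cont (f : R -> R) a b : (forall x, continuous f x) -> ex_RInt f a b.
Proof. intro Hf. apply (ex_RInt_continuous (V := R_CompleteNormedModule)); auto. Qed.

Lemma derive_continuous (f : R -> R) x l : is_derive f x l -> continuous f x.
Proof. intro H. apply (ex_derive_continuous (K := R_AbsRing) (V := R_NormedModule)). now exists l. Qed.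

Lemma is_RInt_gen_antiderivative (F f : R -> R) (lo hi : Rbar) (la lb : R) :
  (forall x, is_derive F x (f x)) -> (forall x, continuous f x) ->
  filterlim F (Rbar_locally lo) (locally la) ->
  filterlim F (Rbar_locally hi) (locally lb) ->
  is_RInt_gen f (Rbar_locally lo) (Rbar_locally hi) (lb - la).
Proof.
  intros HF Hf Hlo Hhi.
  assert (HD : forall x, Derive F x = f x) by (intro; apply is_derive_unique, HF).
  apply (is_RInt_gen_ext (Derive F)).
  { apply filter_forall. intros ab x _. apply HD. }
  apply is_RInt_gen_Derive; auto; apply filter_forall; intros ab x _.
  - now exists (f x).
  - apply (continuous_ext f); auto.
Qed.

Lemma filterlim_atan_p_infty : filterlim atan (Rbar_locally p_infty) (locally (PI / 2)).
Proof.
  apply (filterlim_ext_loc (fun x => PI / 2 - atan (/ x))).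
  { exists 0. intros x Hx. rewrite atan_inv by lra. ring. }
  assert (H : filterlim (fun x => PI / 2 - atan (/ x)) (Rbar_locally p_infty) (locally (PI / 2 - atan 0))).
  { apply (filterlim_comp _ _ _ (fun x => atan (/ x)) (fun y => PI / 2 - y) _ (locally (atan 0))).
    - apply (filterlim_comp _ _ _ Rinv atan _ (Rbar_locally (Finite 0))).
      + exact (filterlim_Rbar_inv p_infty ltac:(discriminate)).
      + apply continuous_atan.
    - apply (derive_continuous _ _ (-1)). auto_derive; auto; ring. }
  rewrite atan_0, Rminus_0_r in H. exact H.
Qed.

Lemma atan_has_lim (c : Rbar) : exists l, filterlim atan (Rbar_locally c) (locally l).
Proof.
  destruct c as [c| |].
  - exists (atan c). apply continuous_atan.
  - exists (PI / 2). apply filterlim_atan_p_infty.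
  - exists (- (PI / 2)).
    apply (filterlim_ext (fun x => - atan (- x))).
    { intro x. rewrite atan_opp. ring. }
    apply (filterlim_comp _ _ _ (fun x => atan (- x)) Ropp _ (locally (PI / 2))).
    + eapply filterlim_comp. apply (filterlim_Rbar_opp m_infty). apply filterlim_atan_p_infty.
    + apply (derive_continuous _ _ (-1)). auto_derive; auto; ring.
Qed.

Lemma abs_RInt_le_atan (f : R -> R) K u v : (forall x, continuous f x) ->
  (forall x, Rabs (f x) <= K / (1 + x ^ 2)) ->
  Rabs (RInt f u v) <= K * Rabs (atan v - atan u).
Proof.
  intros Hf Hdom.
  assert (Hsq : forall x, 0 < 1 + x ^ 2) by (intro; nra).
  assert (Hmaj : forall a b, a <= b -> is_RInt (fun x => K / (1 + x ^ 2)) a b (K * (atan b - atan a))).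
  { intros a b _. replace (K * (atan b - atan a)) with (minus (K * atan b) (K * atan a))
      by (unfold minus, plus, opp; simpl; ring).
    apply (is_RInt_derive (V := R_CompleteNormedModule) (fun x => K * atan x)).
    - intros x _. auto_derive; [auto | field; apply Rgt_not_eq, Hsq].
    - intros x _. apply (derive_continuous _ _ (K * (- (2 * x) / (1 + x ^ 2) ^ 2))).
      auto_derive. apply Rgt_not_eq, Hsq. field. apply Rgt_not_eq, Hsq. }
  assert (Hle : forall a b, a <= b -> Rabs (RInt f a b) <= K * (atan b - atan a)).
  { intros a b Hab. eapply Rle_trans. apply abs_RInt_le; auto. apply ex_RInt_cont; auto.
    rewrite <- (is_RInt_unique _ _ _ _ (Hmaj a b Hab)).
    apply RInt_le; [exact Hab | | eexists; apply Hmaj, Hab | intros; apply Hdom].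
    apply ex_RInt_cont. intro. apply continuous_comp; auto. apply continuous_Rabs. }
  destruct (Rle_dec u v) as [Huv|Huv].
  - rewrite (Rabs_pos_eq (atan v - atan u)). apply Hle; auto.
    assert (atan u <= atan v) by (destruct Huv; [left; apply atan_increasing|subst]; lra). lra.
  - assert (Hsw : RInt f u v = - RInt f v u)
      by (rewrite <- (opp_RInt_swap f v u); [reflexivity | apply ex_RInt_cont; auto]).
    rewrite Hsw, Rabs_Ropp, Rabs_minus_sym, (Rabs_pos_eq (atan u - atan v)).
    apply Hle; lra. left. assert (atan v < atan u) by (apply atan_increasing; lra). lra.
Qed.

Lemma is_derive_RInt_0 (f : R -> R) x : (forall x, continuous f x) ->
  is_derive (fun t => RInt f 0 t) x (f x).
Proof.
  intro Hf. apply (is_derive_RInt f (fun t => RInt f 0 t) 0 x); auto.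
  apply filter_forall. intro b. apply (RInt_correct (V := R_CompleteNormedModule)), ex_RInt_cont, Hf.
Qed.

Lemma RInt_0_has_lim (f : R -> R) K (c : Rbar) : (forall x, continuous f x) ->
  (forall x, Rabs (f x) <= K / (1 + x ^ 2)) ->
  exists l, filterlim (fun t => RInt f 0 t) (Rbar_locally c) (locally l).
Proof.
  intros Hf Hdom.
  assert (HK : 0 <= K) by (apply Rle_trans with (Rabs (f 0)); [apply Rabs_pos|]; generalize (Hdom 0); simpl; lra).
  assert (Hatan := proj2 (filterlim_locally_cauchy (F := Rbar_locally c) atan) (atan_has_lim c)).
  apply (filterlim_locally_cauchy (F := Rbar_locally c)). intro eps.
  assert (Hd : 0 < eps / (K + 1)) by (apply Rdiv_lt_0_compat; [apply cond_pos | lra]).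
  destruct (Hatan (mkposreal _ Hd)) as [P [HP Hball]].
  exists P. split; [exact HP|]. intros u v Hu Hv.
  assert (Hav : Rabs (atan v - atan u) < eps / (K + 1)) by exact (Hball u v Hu Hv).
  change (Rabs (RInt f 0 v - RInt f 0 u) < eps).
  rewrite <- (RInt_Chasles f 0 u v) by (apply ex_RInt_cont; auto).
  change (plus ?a ?b) with (a + b). unfold Rminus. rewrite Rplus_comm, <- Rplus_assoc, Rplus_opp_l, Rplus_0_l.
  eapply Rle_lt_trans. apply abs_RInt_le_atan; eauto.
  apply Rle_lt_trans with (K * (eps / (K + 1))).
  - apply Rmult_le_compat_l; lra.
  - replace (pos eps) with ((K + 1) * (eps / (K + 1))) at 2 by (field; lra). nra.
Qed.

Lemma ex_RInt_gen_dominated (f : R -> R) K (lo hi : Rbar) : (forall x, continuous f x) ->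
  (forall x, Rabs (f x) <= K / (1 + x ^ 2)) ->
  exists l, is_RInt_gen f (Rbar_locally lo) (Rbar_locally hi) l.
Proof.
  intros Hf Hdom.
  destruct (RInt_0_has_lim f K lo Hf Hdom) as [la Hla].
  destruct (RInt_0_has_lim f K hi Hf Hdom) as [lb Hlb].
  exists (lb - la). apply (is_RInt_gen_antiderivative (fun t => RInt f 0 t)); auto.
  intro. apply is_derive_RInt_0, Hf.
Qed.

Lemma dominated_lt (f : R -> R) K (eps : R) x : 0 < eps ->
  (forall x, Rabs (f x) <= K / (1 + x ^ 2)) -> K / eps < Rabs x -> Rabs (f x) < eps.
Proof.
  intros He Hdom Hx. eapply Rle_lt_trans. apply Hdom.
  assert (Hx2 : x ^ 2 = Rabs x * Rabs x) by (rewrite <- pow2_abs; ring).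
  assert (HK : K < eps * Rabs x) by (apply Rmult_lt_reg_r with (/ eps);
    [apply Rinv_0_lt_compat; lra | replace (eps * Rabs x * / eps) with (Rabs x) by (field; lra); exact Hx]).
  apply Rmult_lt_reg_r with (1 + x ^ 2). nra.
  unfold Rdiv. rewrite Rmult_assoc, Rinv_l by nra.
  assert (Rabs x <= 1 + x ^ 2) by (rewrite Hx2; nra). nra.
Qed.

Lemma filterlim_dominated_infty (f : R -> R) K (c : Rbar) : ~ is_finite c ->
  (forall x, Rabs (f x) <= K / (1 + x ^ 2)) -> filterlim f (Rbar_locally c) (locally 0).
Proof.
  intros Hc Hdom. apply filterlim_locally. intro eps.
  assert (Hsmall := fun x => dominated_lt f K eps x (cond_pos eps) Hdom).
  destruct c as [c| |]; [now elim Hc | |].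
  - exists (Rabs (K / eps)). intros x Hx. change (Rabs (f x - 0) < eps). rewrite Rminus_0_r.
    apply Hsmall. generalize (Rle_abs (K / eps)) (Rle_abs x). lra.
  - exists (- Rabs (K / eps)). intros x Hx. change (Rabs (f x - 0) < eps). rewrite Rminus_0_r.
    apply Hsmall. generalize (Rle_abs (K / eps)) (Rle_abs (- x)). rewrite Rabs_Ropp. lra.
Qed.

Lemma exp_le_exp a b : a <= b -> exp a <= exp b.
Proof. intros [H|H]; [left; apply exp_increasing, H | subst; lra]. Qed.

Definition gauss (x : R) : R := exp (- x ^ 2 / 2).

Lemma gauss_pos x : 0 < gauss x.
Proof. apply exp_pos. Qed.

Lemma gauss_le_1 x : gauss x <= 1.
Proof. unfold gauss. rewrite <- exp_0. apply exp_le_exp. nra. Qed.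

Lemma gauss_mul x y : gauss x * gauss y = exp (- (x ^ 2 + y ^ 2) / 2).
Proof. unfold gauss. rewrite <- exp_plus. f_equal. field. Qed.

Lemma sq_sq_mul_gauss_le x : (1 + x ^ 2) ^ 2 * gauss x <= 16.
Proof.
  assert (H1 := exp_ineq1_le (x ^ 2 / 4)).
  assert (Hinv : gauss x * (exp (x ^ 2 / 4) * exp (x ^ 2 / 4)) = 1).
  { unfold gauss. rewrite <- !exp_plus, <- exp_0. f_equal. field. }
  assert (Hg := gauss_pos x). assert (Hx : 0 <= x ^ 2) by nra.
  assert (Hsq : (1 + x ^ 2 / 4) * (1 + x ^ 2 / 4) <= exp (x ^ 2 / 4) * exp (x ^ 2 / 4))
    by (apply Rmult_le_compat; lra).
  nra.
Qed.

Lemma dominated_of_gauss (h : R -> R) K x : 0 <= K ->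
  Rabs (h x) <= K * (1 + x ^ 2) * gauss x -> Rabs (h x) <= 16 * K / (1 + x ^ 2).
Proof.
  intros HK H. assert (Hx : 0 < 1 + x ^ 2) by nra.
  assert (E := sq_sq_mul_gauss_le x).
  apply Rmult_le_reg_r with (1 + x ^ 2); auto.
  replace (16 * K / (1 + x ^ 2) * (1 + x ^ 2)) with (16 * K) by (field; lra).
  apply Rle_trans with (K * ((1 + x ^ 2) ^ 2 * gauss x)); [|nra].
  replace (K * ((1 + x ^ 2) ^ 2 * gauss x)) with (K * (1 + x ^ 2) * gauss x * (1 + x ^ 2)) by ring.
  apply Rmult_le_compat_r; lra.
Qed.

Lemma gauss_dominated x : Rabs (gauss x) <= 16 / (1 + x ^ 2).
Proof.
  replace (16 / (1 + x ^ 2)) with (16 * 1 / (1 + x ^ 2)) by (unfold Rdiv; ring).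
  apply (dominated_of_gauss gauss). lra.
  rewrite Rabs_pos_eq by (left; apply gauss_pos). generalize (gauss_pos x). nra.
Qed.

Lemma gauss_derive (x : R) : is_derive gauss x (- x * gauss x).
Proof.
  unfold gauss. auto_derive; auto.
  replace (- (x * (x * 1)) * / 2) with (- x ^ 2 / 2) by field. field.
Qed.

Lemma gauss_continuous (x : R) : continuous gauss x.
Proof. exact (derive_continuous _ _ _ (gauss_derive x)). Qed.

Lemma derive_0_const (h : R -> R) a b : (forall x, is_derive h x 0) -> h a = h b.
Proof.
  intro Hd. destruct (MVT_gen h a b (fun _ => 0)) as [c [_ Hc]].
  - intros; apply Hd.
  - intros. apply continuity_pt_filterlim, (derive_continuous _ _ _ (Hd x)).
  - lra.
Qed.

Definition gauss_int (t : R) : R := RInt gauss 0 t.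

Definition gauss_aux_integrand (t s : R) : R := exp (- (t ^ 2 * (1 + s ^ 2)) / 2) / (1 + s ^ 2).

Definition gauss_aux (t : R) : R := 2 * RInt (gauss_aux_integrand t) 0 1.

Lemma gauss_int_derive (t : R) : is_derive gauss_int t (gauss t).
Proof. apply is_derive_RInt_0, gauss_continuous. Qed.

Lemma gauss_aux_integrand_derive (t s : R) :
  is_derive (fun u => gauss_aux_integrand u s) t (- t * gauss t * gauss (t * s)).
Proof.
  unfold gauss_aux_integrand. rewrite Rmult_assoc, gauss_mul. auto_derive. nra.
  replace (- (t * (t * 1) * (1 + s * (s * 1))) * / 2) with (- (t ^ 2 + (t * s) ^ 2) / 2) by field.
  field. nra.
Qed.

Lemma continuity_2d_pt_gauss_param x y :
  continuity_2d_pt (fun u v => - u * gauss u * gauss (u * v)) x y.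
Proof.
  assert (Hexp : forall g : R -> R -> R, continuity_2d_pt g x y ->
            continuity_2d_pt (fun u v => exp (- g u v ^ 2 / 2)) x y).
  { intros g Hg. apply (continuity_1d_2d_pt_comp (fun z => exp (- z ^ 2 / 2))); auto.
    apply continuity_pt_filterlim. apply (derive_continuous _ _ _ (gauss_derive (g x y))). }
  unfold gauss. repeat apply continuity_2d_pt_mult.
  - apply continuity_2d_pt_opp, continuity_2d_pt_id1.
  - apply (Hexp (fun u _ => u)), continuity_2d_pt_id1.
  - apply (Hexp (fun u v => u * v)), continuity_2d_pt_mult;
      [apply continuity_2d_pt_id1 | apply continuity_2d_pt_id2].
Qed.

Lemma gauss_aux_derive (t : R) : is_derive gauss_aux t (- 2 * gauss t * gauss_int t).
Proof.
  assert (Hparam : is_derive (fun u => RInt (gauss_aux_integrand u) 0 1) t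
            (RInt (fun s => Derive (fun u => gauss_aux_integrand u s) t) 0 1)).
  { apply (is_derive_RInt_param gauss_aux_integrand 0 1 t).
    - apply filter_forall. intros u s _. eexists. apply gauss_aux_integrand_derive.
    - intros s _. apply continuity_2d_pt_ext with (fun u v => - u * gauss u * gauss (u * v)).
      + intros u v. symmetry. apply is_derive_unique, gauss_aux_integrand_derive.
      + apply continuity_2d_pt_gauss_param.
    - apply filter_forall. intro u. apply ex_RInt_cont. intro s.
      apply (derive_continuous _ _ (Derive (gauss_aux_integrand u) s)).
      apply Derive_correct. unfold gauss_aux_integrand. auto_derive. nra. }
  assert (Hsubst : RInt (fun s => Derive (fun u => gauss_aux_integrand u s) t) 0 1
                   = - gauss t * gauss_int t).
  { rewrite (RInt_ext _ (fun s => scal (- gauss t) (scal t (gauss (t * s + 0))))).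
    2: { intros s _. transitivity (- t * gauss t * gauss (t * s)).
         - apply is_derive_unique, gauss_aux_integrand_derive.
         - rewrite Rplus_0_r. unfold scal; simpl; unfold mult; simpl. ring. }
    rewrite (RInt_scal (V := R_CompleteNormedModule)), (RInt_comp_lin (V := R_CompleteNormedModule)).
    - unfold gauss_int, scal; simpl; unfold mult; simpl.
      replace (t * 0 + 0) with 0 by ring. now replace (t * 1 + 0) with t by ring.
    - apply ex_RInt_cont, gauss_continuous.
    - apply ex_RInt_cont. intro s.
      apply (continuous_scal_r t (fun s => gauss (t * s + 0))).
      apply (continuous_comp (fun s => t * s + 0) gauss); [|apply gauss_continuous].
      apply (derive_continuous _ _ t). auto_derive; auto; ring. }
  rewrite Hsubst in Hparam. unfold gauss_aux.
  replace (- 2 * gauss t * gauss_int t) with (2 * (- gauss t * gauss_int t)) by ring.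
  apply (is_derive_scal (fun u => RInt (gauss_aux_integrand u) 0 1)), Hparam.
Qed.

Lemma gauss_aux_0 : gauss_aux 0 = PI / 2.
Proof.
  unfold gauss_aux. rewrite (RInt_ext _ (fun s => / (1 + s ^ 2))).
  2: { intros s _. unfold gauss_aux_integrand.
       replace (- (0 ^ 2 * (1 + s ^ 2)) / 2) with 0 by field. rewrite exp_0. apply Rmult_1_l. }
  assert (H : is_RInt (fun s => / (1 + s ^ 2)) 0 1 (minus (atan 1) (atan 0))).
  { apply (is_RInt_derive (V := R_CompleteNormedModule) atan).
    - intros x _. rewrite <- Rsqr_pow2. apply is_derive_atan.
    - intros x _. apply (derive_continuous _ _ (- (2 * x) / (1 + x ^ 2) ^ 2)).
      auto_derive; [|field]; apply Rgt_not_eq; nra. }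
  rewrite (is_RInt_unique _ _ _ _ H), atan_1, atan_0. unfold minus, plus, opp; simpl. field.
Qed.

Lemma gauss_int_sq_add_aux t : gauss_int t ^ 2 + gauss_aux t = PI / 2.
Proof.
  rewrite <- gauss_aux_0.
  replace (gauss_aux 0) with (gauss_int 0 ^ 2 + gauss_aux 0)
    by (unfold gauss_int; rewrite RInt_point; unfold zero; simpl; ring).
  apply (derive_0_const (fun x => gauss_int x ^ 2 + gauss_aux x)). intro x.
  replace 0 with (INR 2 * gauss x * gauss_int x ^ Init.Nat.pred 2 + (- 2 * gauss x * gauss_int x))
    by (simpl; ring).
  apply (is_derive_plus (fun x => gauss_int x ^ 2) gauss_aux).
  - apply is_derive_pow, gauss_int_derive.
  - apply gauss_aux_derive.
Qed.

Lemma gauss_aux_bounds t : 0 <= gauss_aux t <= 2 * gauss t.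
Proof.
  assert (Hex : ex_RInt (gauss_aux_integrand t) 0 1).
  { apply ex_RInt_cont. intro s. apply (derive_continuous _ _ (Derive (gauss_aux_integrand t) s)).
    apply Derive_correct. unfold gauss_aux_integrand. auto_derive. nra. }
  assert (Hb : forall s, 0 <= gauss_aux_integrand t s <= gauss t).
  { intro s. unfold gauss_aux_integrand. assert (Hs : 1 <= 1 + s ^ 2) by nra.
    assert (Hle : exp (- (t ^ 2 * (1 + s ^ 2)) / 2) <= gauss t) by (apply exp_le_exp; nra).
    assert (Hp := exp_pos (- (t ^ 2 * (1 + s ^ 2)) / 2)).
    split; [apply Rdiv_le_0_compat; lra|].
    apply Rmult_le_reg_r with (1 + s ^ 2); [lra|].
    unfold Rdiv. rewrite Rmult_assoc, Rinv_l by lra. nra. }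
  unfold gauss_aux. split.
  - apply Rmult_le_pos; [lra|]. apply RInt_ge_0; auto; [lra | intros; apply Hb].
  - apply Rmult_le_compat_l; [lra|].
    replace (gauss t) with (RInt (fun _ => gauss t) 0 1)
      by (rewrite RInt_const; unfold scal; simpl; unfold mult; simpl; ring).
    apply RInt_le; auto; [lra | apply ex_RInt_cont; intros; apply continuous_const | intros; apply Hb].
Qed.

Lemma gauss_int_nonneg t : 0 <= t -> 0 <= gauss_int t.
Proof.
  intro Ht. apply RInt_ge_0; auto.
  - apply ex_RInt_cont, gauss_continuous.
  - intros; left; apply gauss_pos.
Qed.

Lemma filterlim_gauss_int : filterlim gauss_int (Rbar_locally p_infty) (locally (sqrt (PI / 2))).
Proof.
  apply (filterlim_ext_loc (fun t => sqrt (PI / 2 - gauss_aux t))).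
  { exists 0. intros t Ht. rewrite <- (gauss_int_sq_add_aux t).
    replace (gauss_int t ^ 2 + gauss_aux t - gauss_aux t) with (gauss_int t * gauss_int t) by ring.
    apply sqrt_square, gauss_int_nonneg. lra. }
  apply (filterlim_comp _ _ _ (fun t => PI / 2 - gauss_aux t) sqrt _ (locally (PI / 2))).
  - assert (Haux : filterlim gauss_aux (Rbar_locally p_infty) (locally 0)).
    { apply (filterlim_dominated_infty _ 32); [easy|]. intro x.
      destruct (gauss_aux_bounds x). assert (Hg := gauss_dominated x).
      rewrite Rabs_pos_eq in Hg by (left; apply gauss_pos).
      rewrite Rabs_pos_eq by lra. unfold Rdiv in *. lra. }
    assert (H : filterlim (fun t => PI / 2 - gauss_aux t) (Rbar_locally p_infty) (locally (PI / 2 - 0))).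
    { apply (filterlim_comp _ _ _ gauss_aux (fun y => PI / 2 - y) _ (locally 0)); [exact Haux|].
      apply (derive_continuous _ _ (-1)). auto_derive; auto; ring. }
    now rewrite Rminus_0_r in H.
  - apply continuity_pt_filterlim, continuity_pt_sqrt. generalize PI_RGT_0; lra.
Qed.

Lemma sqrt_2PI_pos : 0 < sqrt (2 * PI).
Proof. apply sqrt_lt_R0. generalize PI_RGT_0; lra. Qed.

Lemma inv_sqrt_2PI_le_1 : / sqrt (2 * PI) <= 1.
Proof.
  rewrite <- Rinv_1. apply Rinv_le_contravar; [lra|].
  rewrite <- sqrt_1. apply sqrt_le_1_alt. generalize PI2_1; lra.
Qed.

Lemma inv_sqrt_2PI_mul_sqrt_PI_2 : / sqrt (2 * PI) * sqrt (PI / 2) = 1 / 2.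
Proof.
  assert (HP := PI_RGT_0).
  replace (2 * PI) with ((2 * 2) * (PI / 2)) by field.
  rewrite sqrt_mult, sqrt_square by lra.
  assert (0 < sqrt (PI / 2)) by (apply sqrt_lt_R0; lra). field. lra.
Qed.

Lemma phi_gauss x : phi x = / sqrt (2 * PI) * gauss x.
Proof. reflexivity. Qed.

Lemma phi_pos x : 0 < phi x.
Proof. apply Rmult_lt_0_compat; [apply Rinv_0_lt_compat, sqrt_2PI_pos | apply gauss_pos]. Qed.

Lemma phi_le_gauss x : phi x <= gauss x.
Proof. rewrite phi_gauss. generalize inv_sqrt_2PI_le_1 (gauss_pos x). nra. Qed.

Lemma phi_even x : phi (- x) = phi x.
Proof. unfold phi. now replace ((- x) ^ 2) with (x ^ 2) by ring. Qed.

Lemma phi_derive (x : R) : is_derive phi x (- x * phi x).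
Proof.
  rewrite phi_gauss. replace (- x * (/ sqrt (2 * PI) * gauss x)) with (/ sqrt (2 * PI) * (- x * gauss x)) by ring.
  apply (is_derive_scal gauss), gauss_derive.
Qed.

Lemma phi_continuous (x : R) : continuous phi x.
Proof. exact (derive_continuous _ _ _ (phi_derive x)). Qed.

Lemma phi_dominated x : Rabs (phi x) <= 16 / (1 + x ^ 2).
Proof.
  eapply Rle_trans; [|apply gauss_dominated]. rewrite !Rabs_pos_eq.
  - apply phi_le_gauss.
  - left; apply gauss_pos.
  - left; apply phi_pos.
Qed.

Lemma phi_lipschitz t v : Rabs (phi t - phi v) <= Rabs (t - v).
Proof.
  destruct (MVT_abs phi (fun x => - x * phi x) v t) as [c [Hc _]].
  { intros; apply is_derive_Reals, phi_derive. }
  rewrite Hc, Rabs_mult. rewrite <- (Rmult_1_l (Rabs (t - v))) at 2.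
  apply Rmult_le_compat_r; [apply Rabs_pos|].
  rewrite Rabs_Ropp, (Rabs_pos_eq (phi c)) by (left; apply phi_pos).
  assert (Habs : Rabs c <= 1 + c ^ 2 / 2) by (rewrite <- pow2_abs; generalize (Rabs_pos c); nra).
  assert (Hexp := exp_ineq1_le (c ^ 2 / 2)).
  assert (Hinv : gauss c * exp (c ^ 2 / 2) = 1).
  { unfold gauss. rewrite <- exp_plus, <- exp_0. f_equal. field. }
  generalize (phi_le_gauss c) (phi_pos c) (Rabs_pos c) (gauss_pos c). nra.
Qed.

Definition ncdf (x : R) : R := 1 / 2 + RInt phi 0 x.

Lemma ncdf_gauss_int x : ncdf x = 1 / 2 + / sqrt (2 * PI) * gauss_int x.
Proof.
  unfold ncdf, gauss_int. f_equal. rewrite <- (RInt_scal (V := R_CompleteNormedModule)).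
  - reflexivity.
  - apply ex_RInt_cont, gauss_continuous.
Qed.

Lemma ncdf_derive (x : R) : is_derive ncdf x (phi x).
Proof.
  unfold ncdf. replace (phi x) with (0 + phi x) by ring.
  apply (is_derive_plus (fun _ => 1 / 2)); [apply (@is_derive_const R_AbsRing R_NormedModule)|].
  apply is_derive_RInt_0, phi_continuous.
Qed.

Lemma ncdf_continuous (x : R) : continuous ncdf x.
Proof. exact (derive_continuous _ _ _ (ncdf_derive x)). Qed.

Lemma ncdf_0 : ncdf 0 = 1 / 2.
Proof. unfold ncdf. rewrite RInt_point. unfold zero; simpl. ring. Qed.

Lemma ncdf_opp x : ncdf (- x) = 1 - ncdf x.
Proof.
  enough (H : ncdf (- x) + ncdf x = ncdf (- 0) + ncdf 0)
    by (rewrite Ropp_0, ncdf_0 in H; lra).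
  apply (derive_0_const (fun y => ncdf (- y) + ncdf y)). intro y.
  replace 0 with (- 1 * phi (- y) + phi y) by (rewrite phi_even; ring).
  apply (is_derive_plus (fun y => ncdf (- y))); [|apply ncdf_derive].
  apply (is_derive_comp ncdf Ropp); [apply ncdf_derive|].
  apply (is_derive_ext (fun t => - t)); [reflexivity|]. auto_derive; auto; ring.
Qed.

Lemma ncdf_lt a b : a < b -> ncdf a < ncdf b.
Proof.
  intro Hab. destruct (MVT_gen ncdf a b phi) as [c [_ Hc]].
  - intros; apply ncdf_derive.
  - intros. apply continuity_pt_filterlim, ncdf_continuous.
  - generalize (phi_pos c). nra.
Qed.

Lemma ncdf_bounds x : 0 <= ncdf x <= 1.
Proof.
  assert (Hpos : forall y, 0 <= y -> 1 / 2 <= ncdf y <= 1).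
  { intros y Hy. rewrite ncdf_gauss_int.
    assert (Hc : 0 < / sqrt (2 * PI)) by apply Rinv_0_lt_compat, sqrt_2PI_pos.
    assert (Hg := gauss_int_nonneg y Hy).
    assert (Hle : gauss_int y <= sqrt (PI / 2)).
    { rewrite <- (sqrt_square (gauss_int y)) by exact Hg.
      apply sqrt_le_1_alt. generalize (gauss_int_sq_add_aux y) (gauss_aux_bounds y). simpl. nra. }
    assert (/ sqrt (2 * PI) * gauss_int y <= / sqrt (2 * PI) * sqrt (PI / 2))
      by (apply Rmult_le_compat_l; lra).
    rewrite inv_sqrt_2PI_mul_sqrt_PI_2 in *. split; nra. }
  destruct (Rle_dec 0 x) as [Hx|Hx].
  - generalize (Hpos x Hx). lra.
  - replace x with (- - x) by ring. rewrite ncdf_opp. generalize (Hpos (- x)). lra.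
Qed.

Lemma filterlim_ncdf_p_infty : filterlim ncdf (Rbar_locally p_infty) (locally 1).
Proof.
  apply (filterlim_ext (fun x => 1 / 2 + / sqrt (2 * PI) * gauss_int x)).
  { intro; symmetry; apply ncdf_gauss_int. }
  assert (H : filterlim (fun x => 1 / 2 + / sqrt (2 * PI) * gauss_int x) (Rbar_locally p_infty)
               (locally (1 / 2 + / sqrt (2 * PI) * sqrt (PI / 2)))).
  { apply (filterlim_comp _ _ _ gauss_int (fun y => 1 / 2 + / sqrt (2 * PI) * y) _ (locally (sqrt (PI / 2))));
      [apply filterlim_gauss_int|].
    apply (derive_continuous (fun y => 1 / 2 + / sqrt (2 * PI) * y) _ (/ sqrt (2 * PI))).
    auto_derive; auto; ring. }
  rewrite inv_sqrt_2PI_mul_sqrt_PI_2 in H. now replace (1 / 2 + 1 / 2) with 1 in H by field.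
Qed.

Definition ncdf_bar (c : Rbar) : R :=
  match c with Finite c => ncdf c | p_infty => 1 | m_infty => 0 end.

Definition phi_bar (c : Rbar) : R :=
  match c with Finite c => phi c | _ => 0 end.

Lemma filterlim_ncdf (c : Rbar) : filterlim ncdf (Rbar_locally c) (locally (ncdf_bar c)).
Proof.
  destruct c as [c| |]; simpl.
  - apply ncdf_continuous.
  - apply filterlim_ncdf_p_infty.
  - apply (filterlim_ext (fun x => 1 - ncdf (- x))).
    { intro x. rewrite ncdf_opp. ring. }
    rewrite <- (Rminus_diag 1).
    apply (filterlim_comp _ _ _ (fun x => ncdf (- x)) (fun y => 1 - y) _ (locally 1)).
    + eapply filterlim_comp. apply (filterlim_Rbar_opp m_infty). apply filterlim_ncdf_p_infty.
    + apply (derive_continuous (fun y => 1 - y) _ (-1)). auto_derive; auto; ring.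
Qed.

Lemma filterlim_phi (c : Rbar) : filterlim phi (Rbar_locally c) (locally (phi_bar c)).
Proof.
  destruct c as [c| |]; simpl.
  - apply phi_continuous.
  - apply (filterlim_dominated_infty _ 16); [easy | apply phi_dominated].
  - apply (filterlim_dominated_infty _ 16); [easy | apply phi_dominated].
Qed.

Lemma is_RInt_gen_phi (lo hi : Rbar) :
  is_RInt_gen phi (Rbar_locally lo) (Rbar_locally hi) (ncdf_bar hi - ncdf_bar lo).
Proof.
  apply (is_RInt_gen_antiderivative ncdf);
    [apply ncdf_derive | apply phi_continuous | apply filterlim_ncdf | apply filterlim_ncdf].
Qed.

Lemma is_RInt_gen_id_mul_phi (lo hi : Rbar) :
  is_RInt_gen (fun x => x * phi x) (Rbar_locally lo) (Rbar_locally hi) (phi_bar lo - phi_bar hi).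
Proof.
  replace (phi_bar lo - phi_bar hi) with (- phi_bar hi - - phi_bar lo) by ring.
  apply (is_RInt_gen_antiderivative (fun x => - phi x)).
  - intro x. replace (x * phi x) with (- (- x * phi x)) by ring.
    apply (is_derive_opp phi), phi_derive.
  - intro x. apply (continuous_mult (fun x => x) phi); [apply continuous_id | apply phi_continuous].
  - eapply filterlim_comp; [apply filterlim_phi | apply continuity_pt_filterlim, continuity_pt_opp, continuity_pt_id].
  - eapply filterlim_comp; [apply filterlim_phi | apply continuity_pt_filterlim, continuity_pt_opp, continuity_pt_id].
Qed.

Lemma Phi_ncdf x : Phi x = ncdf x.
Proof.
  unfold Phi. apply is_RInt_gen_unique.
  replace (ncdf x) with (ncdf_bar (Finite x) - ncdf_bar m_infty) by (simpl; ring).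
  apply is_RInt_gen_phi.
Qed.

Definition cond_sd (r : R) : R := sqrt (1 - r ^ 2).

Lemma cond_sd_pos r : -1 < r < 1 -> 0 < cond_sd r.
Proof. intro. apply sqrt_lt_R0. nra. Qed.

Lemma cond_sd_sq r : -1 < r < 1 -> cond_sd r * cond_sd r = 1 - r ^ 2.
Proof. intro. apply sqrt_sqrt. nra. Qed.

Lemma phi2_factor r x y : -1 < r < 1 ->
  phi2 r x y = phi x * (phi ((y - r * x) / cond_sd r) / cond_sd r).
Proof.
  intro Hr. assert (Hs := cond_sd_pos r Hr). assert (Hs2 := cond_sd_sq r Hr).
  assert (Hq : sqrt (2 * PI) * sqrt (2 * PI) = 2 * PI) by (apply sqrt_sqrt; generalize PI_RGT_0; lra).
  assert (Hq0 := sqrt_2PI_pos).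
  unfold phi2, phi. fold (cond_sd r). rewrite <- Hs2.
  replace (2 * PI * cond_sd r) with (sqrt (2 * PI) * sqrt (2 * PI) * cond_sd r) by (rewrite Hq; ring).
  replace (- (x ^ 2 - 2 * r * x * y + y ^ 2) / (2 * (cond_sd r * cond_sd r)))
    with (- x ^ 2 / 2 + - ((y - r * x) / cond_sd r) ^ 2 / 2)
    by (replace (x ^ 2 - 2 * r * x * y + y ^ 2) with (x ^ 2 * (cond_sd r * cond_sd r) + (y - r * x) ^ 2)
          by (rewrite Hs2; ring); field; lra).
  rewrite exp_plus. field. lra.
Qed.

Definition cond_cdf (r x : R) (c : Rbar) : R :=
  match c with
  | Finite c => ncdf ((c - r * x) / cond_sd r)
  | p_infty => 1
  | m_infty => 0
  end.

Lemma cond_cdf_bounds r x c : 0 <= cond_cdf r x c <= 1.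
Proof. destruct c; simpl; try lra. apply ncdf_bounds. Qed.

Lemma cond_cdf_continuous r c (x : R) : -1 < r < 1 -> continuous (fun x => cond_cdf r x c) x.
Proof.
  intro Hr. assert (Hs := cond_sd_pos r Hr). destruct c as [c| |]; simpl.
  - apply (continuous_comp (fun x => (c - r * x) / cond_sd r) ncdf); [|apply ncdf_continuous].
    apply (derive_continuous _ _ (- r / cond_sd r)). auto_derive; [lra | field; lra].
  - apply continuous_const.
  - apply continuous_const.
Qed.

Lemma filterlim_cond_cdf r x (c : Rbar) : -1 < r < 1 ->
  filterlim (fun y => ncdf ((y - r * x) / cond_sd r)) (Rbar_locally c) (locally (cond_cdf r x c)).
Proof.
  intro Hr. assert (Hs := cond_sd_pos r Hr).
  destruct c as [c| |]; simpl.
  - apply (continuous_comp (fun y => (y - r * x) / cond_sd r) ncdf); [|apply ncdf_continuous].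
    apply (derive_continuous _ _ (/ cond_sd r)). auto_derive; [lra | field; lra].
  - eapply filterlim_comp; [|apply (filterlim_ncdf p_infty)].
    intros P [M HM]. exists (M * cond_sd r + r * x). intros y Hy. apply HM.
    apply Rmult_lt_reg_r with (cond_sd r); auto. unfold Rdiv. rewrite Rmult_assoc, Rinv_l; lra.
  - eapply filterlim_comp; [|apply (filterlim_ncdf m_infty)].
    intros P [M HM]. exists (M * cond_sd r + r * x). intros y Hy. apply HM.
    apply Rmult_lt_reg_r with (cond_sd r); auto. unfold Rdiv. rewrite Rmult_assoc, Rinv_l; lra.
Qed.

Lemma is_RInt_gen_phi2 r x (lo hi : Rbar) : -1 < r < 1 ->
  is_RInt_gen (fun y => phi2 r x y) (Rbar_locally lo) (Rbar_locally hi)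
    (phi x * (cond_cdf r x hi - cond_cdf r x lo)).
Proof.
  intro Hr. assert (Hs := cond_sd_pos r Hr).
  assert (Hlim : forall c, filterlim (fun y => phi x * ncdf ((y - r * x) / cond_sd r))
                   (Rbar_locally c) (locally (phi x * cond_cdf r x c))).
  { intro c. eapply filterlim_comp; [apply filterlim_cond_cdf, Hr|].
    apply (derive_continuous (fun z => phi x * z) _ (phi x)). auto_derive; auto; ring. }
  rewrite Rmult_minus_distr_l.
  apply (is_RInt_gen_antiderivative (fun y => phi x * ncdf ((y - r * x) / cond_sd r))); auto.
  - intro y. rewrite phi2_factor by exact Hr.
    apply (is_derive_scal (fun y => ncdf ((y - r * x) / cond_sd r))).
    replace (phi ((y - r * x) / cond_sd r) / cond_sd r)
      with (/ cond_sd r * phi ((y - r * x) / cond_sd r)) by (field; lra).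
    apply (is_derive_comp ncdf (fun y => (y - r * x) / cond_sd r)); [apply ncdf_derive|].
    auto_derive; [lra | field; lra].
  - intro y. apply (continuous_ext (fun y => phi x * (phi ((y - r * x) / cond_sd r) / cond_sd r))).
    { intro; symmetry; apply phi2_factor, Hr. }
    apply (continuous_scal_r (phi x) (fun y => phi ((y - r * x) / cond_sd r) / cond_sd r)).
    apply (continuous_scal_l (fun y => phi ((y - r * x) / cond_sd r)) (/ cond_sd r)).
    apply (continuous_comp (fun y => (y - r * x) / cond_sd r) phi); [|apply phi_continuous].
    apply (derive_continuous _ _ (/ cond_sd r)). auto_derive; [lra | field; lra].
Qed.

Lemma ncdf_taylor u c : Rabs (ncdf u - ncdf c - phi c * (u - c)) <= (u - c) ^ 2.
Proof.
  destruct (MVT_abs (fun t => ncdf t - phi c * t) (fun t => phi t - phi c) c u) as [z [Hz Hzr]].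
  { intros t _. apply is_derive_Reals, (is_derive_minus ncdf (fun t => phi c * t)); [apply ncdf_derive|].
    apply (is_derive_ext (fun t => phi c * t)); [reflexivity|]. auto_derive; auto; ring. }
  replace (ncdf u - ncdf c - phi c * (u - c)) with ((ncdf u - phi c * u) - (ncdf c - phi c * c)) by ring.
  rewrite Hz, <- pow2_abs. simpl. rewrite Rmult_1_r.
  apply Rmult_le_compat_r; [apply Rabs_pos|].
  eapply Rle_trans; [apply phi_lipschitz|].
  destruct Hzr as [H1 H2]. unfold Rmin, Rmax in *; destruct Rle_dec; unfold Rabs; repeat destruct Rcase_abs; lra.
Qed.

Lemma cond_sd_bounds r : Rabs r <= 1 / 2 -> 1 / 2 <= cond_sd r /\ 0 <= / cond_sd r - 1 <= 2 * r ^ 2.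
Proof.
  intro Hr. assert (Hr2 : r ^ 2 <= 1 / 4) by (rewrite <- pow2_abs; generalize (Rabs_pos r); nra).
  assert (Hr1 : -1 < r < 1) by (split; nra).
  assert (Hs := cond_sd_pos r Hr1). assert (Hs2 := cond_sd_sq r Hr1).
  assert (Hs1 : 1 / 2 <= cond_sd r <= 1) by nra.
  split; [lra|].
  replace (/ cond_sd r - 1) with (r ^ 2 / (cond_sd r * (1 + cond_sd r)))
    by (replace (r ^ 2) with (1 - cond_sd r * cond_sd r) by lra; field; lra).
  assert (Hinv : / (cond_sd r * (1 + cond_sd r)) <= 2)
    by (replace 2 with (/ (1 / 2)) by field; apply Rinv_le_contravar; nra).
  assert (0 < / (cond_sd r * (1 + cond_sd r))) by (apply Rinv_0_lt_compat; nra).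
  unfold Rdiv. split; nra.
Qed.

(* Shifting c by - r x and rescaling by 1 / cond_sd r = 1 + O(r^2) moves ncdf c by - r x phi c + O(r^2). *)
Lemma ncdf_cond_expansion r x c : Rabs r <= 1 / 2 ->
  Rabs (ncdf ((c - r * x) / cond_sd r) - ncdf c + r * x * phi c)
    <= 4 * r ^ 2 * (1 + Rabs c + Rabs x) ^ 2.
Proof.
  intro Hr. destruct (cond_sd_bounds r Hr) as [Hs [Hi1 Hi2]].
  set (d := (c - r * x) / cond_sd r - c).
  assert (Habs : Rabs (c - r * x) <= Rabs c + Rabs x).
  { eapply Rle_trans; [apply Rabs_triang|]. rewrite Rabs_Ropp, Rabs_mult.
    assert (Rabs r * Rabs x <= Rabs x) by (generalize (Rabs_pos x); nra). lra. }
  assert (Hr2 : r ^ 2 = Rabs r * Rabs r) by (rewrite <- pow2_abs; ring).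
  assert (Hd1 : Rabs (d + r * x) <= 2 * r ^ 2 * (Rabs c + Rabs x)).
  { replace (d + r * x) with ((c - r * x) * (/ cond_sd r - 1)) by (unfold d; field; lra).
    rewrite Rabs_mult, (Rabs_pos_eq (/ cond_sd r - 1)) by lra.
    generalize (Rabs_pos (c - r * x)). nra. }
  assert (Hd2 : Rabs d <= 2 * Rabs r * (Rabs c + Rabs x)).
  { replace d with ((d + r * x) - r * x) by ring.
    eapply Rle_trans; [apply Rabs_triang|]. rewrite Rabs_Ropp, Rabs_mult.
    assert (Hq : 2 * r ^ 2 <= Rabs r) by (rewrite Hr2; generalize (Rabs_pos r); nra).
    generalize (Rabs_pos r) (Rabs_pos x) (Rabs_pos c). nra. }
  assert (Hdsq : d ^ 2 <= 4 * r ^ 2 * (Rabs c + Rabs x) ^ 2).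
  { rewrite <- pow2_abs, Hr2. generalize (Rabs_pos d). nra. }
  assert (Ht := ncdf_taylor ((c - r * x) / cond_sd r) c). fold d in Ht.
  replace (ncdf ((c - r * x) / cond_sd r) - ncdf c + r * x * phi c)
    with ((ncdf ((c - r * x) / cond_sd r) - ncdf c - phi c * d) + phi c * (d + r * x)) by (unfold d; ring).
  eapply Rle_trans; [apply Rabs_triang|]. rewrite Rabs_mult, (Rabs_pos_eq (phi c)) by (left; apply phi_pos).
  generalize (phi_le_gauss c) (gauss_le_1 c) (phi_pos c) (Rabs_pos (d + r * x)) (Rabs_pos x) (Rabs_pos c).
  nra.
Qed.

Definition finite_abs_le (B : R) (c : Rbar) : Prop :=
  match c with Finite c => Rabs c <= B | _ => True end.

Definition cond_cdf_rem (r x : R) (c : Rbar) : R := cond_cdf r x c - ncdf_bar c + r * x * phi_bar c.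

Lemma cond_cdf_rem_bound r x c B : Rabs r <= 1 / 2 -> finite_abs_le B c -> 0 <= B ->
  Rabs (cond_cdf_rem r x c) <= 4 * r ^ 2 * (1 + B + Rabs x) ^ 2.
Proof.
  intros Hr Hc HB.
  assert (H0 : 0 <= 4 * r ^ 2 * (1 + B + Rabs x) ^ 2) by (apply Rmult_le_pos; [nra | apply pow2_ge_0]).
  destruct c as [c| |]; unfold cond_cdf_rem; simpl in *.
  - eapply Rle_trans; [apply ncdf_cond_expansion, Hr|].
    apply Rmult_le_compat_l; [nra|]. generalize (Rabs_pos c) (Rabs_pos x). nra.
  - replace (1 - 1 + r * x * 0) with 0 by ring. now rewrite Rabs_R0.
  - replace (0 - 0 + r * x * 0) with 0 by ring. now rewrite Rabs_R0.
Qed.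

Definition cell_integrand (r : R) (a b : Rbar) (x : R) : R :=
  phi x * (cond_cdf r x b - cond_cdf r x a).

Lemma cell_integrand_continuous r a b (x : R) : -1 < r < 1 -> continuous (cell_integrand r a b) x.
Proof.
  intro Hr. apply (continuous_mult phi (fun x => cond_cdf r x b - cond_cdf r x a)); [apply phi_continuous|].
  apply (continuous_minus (fun x => cond_cdf r x b)); apply cond_cdf_continuous, Hr.
Qed.

Lemma cell_integrand_dominated r a b x : Rabs (cell_integrand r a b x) <= 16 / (1 + x ^ 2).
Proof.
  unfold cell_integrand. rewrite Rabs_mult. eapply Rle_trans; [|apply phi_dominated].
  rewrite <- (Rmult_1_r (Rabs (phi x))) at 2. apply Rmult_le_compat_l; [apply Rabs_pos|].
  generalize (cond_cdf_bounds r x b) (cond_cdf_bounds r x a). unfold Rabs; destruct Rcase_abs; lra.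
Qed.

Lemma cell_integrand_expansion r a b x :
  cell_integrand r a b x = (ncdf_bar b - ncdf_bar a) * phi x + r * (phi_bar a - phi_bar b) * (x * phi x)
                           + phi x * (cond_cdf_rem r x b - cond_cdf_rem r x a).
Proof. unfold cell_integrand, cond_cdf_rem. ring. Qed.

Lemma cell_rem_dominated r a b x B : Rabs r <= 1 / 2 -> finite_abs_le B a -> finite_abs_le B b -> 0 <= B ->
  Rabs (phi x * (cond_cdf_rem r x b - cond_cdf_rem r x a)) <= r ^ 2 * (256 * (1 + B) ^ 2 / (1 + x ^ 2)).
Proof.
  intros Hr Ha Hb HB.
  assert (Hx2 : (1 + B + Rabs x) ^ 2 <= 2 * (1 + B) ^ 2 * (1 + x ^ 2)).
  { rewrite <- (pow2_abs x). generalize (Rabs_pos x). generalize (Rabs x). intros ax Hax.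
    assert (H1 : 1 + B + ax <= (1 + B) * (1 + ax)) by nra.
    assert (H2 : (1 + B + ax) ^ 2 <= ((1 + B) * (1 + ax)) ^ 2) by (apply pow_incr; lra).
    assert (H3 : (1 + ax) ^ 2 <= 2 * (1 + ax ^ 2)) by (generalize (pow2_ge_0 (1 - ax)); nra).
    assert (0 <= (1 + B) ^ 2) by apply pow2_ge_0.
    replace (((1 + B) * (1 + ax)) ^ 2) with ((1 + B) ^ 2 * (1 + ax) ^ 2) in H2 by ring. nra. }
  assert (Hrem : Rabs (cond_cdf_rem r x b - cond_cdf_rem r x a) <= 8 * r ^ 2 * (1 + B + Rabs x) ^ 2).
  { unfold Rminus. eapply Rle_trans; [apply Rabs_triang|]. rewrite Rabs_Ropp.
    generalize (cond_cdf_rem_bound r x b B Hr Hb HB) (cond_cdf_rem_bound r x a B Hr Ha HB). lra. }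
  replace (r ^ 2 * (256 * (1 + B) ^ 2 / (1 + x ^ 2))) with (16 * (16 * r ^ 2 * (1 + B) ^ 2) / (1 + x ^ 2))
    by (field; nra).
  apply (dominated_of_gauss (fun x => phi x * (cond_cdf_rem r x b - cond_cdf_rem r x a))); [nra|].
  rewrite Rabs_mult, (Rabs_pos_eq (phi x)) by (left; apply phi_pos).
  assert (Hp := phi_le_gauss x). assert (Hpp := phi_pos x).
  assert (0 <= 16 * r ^ 2 * (1 + B) ^ 2 * (1 + x ^ 2)) by (apply Rmult_le_pos; nra).
  apply Rle_trans with (phi x * (16 * r ^ 2 * (1 + B) ^ 2 * (1 + x ^ 2))).
  - apply Rmult_le_compat_l; nra.
  - rewrite Rmult_comm. apply Rmult_le_compat_l; auto.
Qed.

Lemma Rbar_locally_lt (lo : Rbar) (m : R) : Rbar_lt lo m -> Rbar_locally lo (fun x => x < m).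
Proof.
  destruct lo as [l| |]; simpl; intro H; try tauto.
  - exact (open_lt m l H).
  - now exists m.
Qed.

Lemma Rbar_locally_gt (hi : Rbar) (m : R) : Rbar_lt m hi -> Rbar_locally hi (fun x => m < x).
Proof.
  destruct hi as [l| |]; simpl; intro H; try tauto.
  - exact (open_gt m l H).
  - now exists m.
Qed.

Lemma filter_prod_Rbar_locally_le (lo hi : Rbar) (m : R) : Rbar_lt lo m -> Rbar_lt m hi ->
  filter_prod (Rbar_locally lo) (Rbar_locally hi) (fun ab : R * R => fst ab <= snd ab).
Proof.
  intros Hlo Hhi. exists (fun x => x < m) (fun x => m < x);
    [apply Rbar_locally_lt, Hlo | apply Rbar_locally_gt, Hhi | intros x y Hx Hy; simpl; lra].
Qed.

Lemma RInt_gen_cell_integrand_approx (a b lo hi : Rbar) (B m : R) :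
  finite_abs_le B a -> finite_abs_le B b -> 0 <= B -> Rbar_lt lo m -> Rbar_lt m hi ->
  exists J, forall r, Rabs r <= 1 / 2 ->
    Rabs (RInt_gen (cell_integrand r a b) (Rbar_locally lo) (Rbar_locally hi)
          - (ncdf_bar b - ncdf_bar a) * (ncdf_bar hi - ncdf_bar lo)
          - r * ((phi_bar a - phi_bar b) * (phi_bar lo - phi_bar hi))) <= r ^ 2 * J.
Proof.
  intros Ha Hb HB Hlo Hhi.
  set (K := 256 * (1 + B) ^ 2).
  destruct (ex_RInt_gen_dominated (fun x => K / (1 + x ^ 2)) K lo hi) as [J HJ].
  { intro x. apply (derive_continuous _ _ (K * (- (2 * x) / (1 + x ^ 2) ^ 2))).
    auto_derive; [|field]; apply Rgt_not_eq; nra. }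
  { intro x. rewrite Rabs_pos_eq; [lra|]. apply Rdiv_le_0_compat; unfold K; nra. }
  exists J. intros r Hr.
  assert (Hr1 : -1 < r < 1) by (unfold Rabs in Hr; destruct Rcase_abs in Hr; lra).
  destruct (ex_RInt_gen_dominated (cell_integrand r a b) 16 lo hi) as [V HV].
  { intro; apply cell_integrand_continuous, Hr1. }
  { apply cell_integrand_dominated. }
  rewrite (is_RInt_gen_unique _ _ HV).
  assert (Hrem : is_RInt_gen (fun x => phi x * (cond_cdf_rem r x b - cond_cdf_rem r x a))
      (Rbar_locally lo) (Rbar_locally hi)
      (V - (ncdf_bar b - ncdf_bar a) * (ncdf_bar hi - ncdf_bar lo)
         - r * ((phi_bar a - phi_bar b) * (phi_bar lo - phi_bar hi)))).
  { assert (H := is_RInt_gen_minus _ _ _ _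
                   (is_RInt_gen_minus _ _ _ _ HV (is_RInt_gen_scal _ (ncdf_bar b - ncdf_bar a) _ (is_RInt_gen_phi lo hi)))
                   (is_RInt_gen_scal _ (r * (phi_bar a - phi_bar b)) _ (is_RInt_gen_id_mul_phi lo hi))).
    unfold minus, plus, opp, scal in H; simpl in H; unfold mult in H; simpl in H.
    replace (V - (ncdf_bar b - ncdf_bar a) * (ncdf_bar hi - ncdf_bar lo)
             - r * ((phi_bar a - phi_bar b) * (phi_bar lo - phi_bar hi)))
      with (V + - ((ncdf_bar b - ncdf_bar a) * (ncdf_bar hi - ncdf_bar lo))
             + - (r * (phi_bar a - phi_bar b) * (phi_bar lo - phi_bar hi))) by ring.
    eapply is_RInt_gen_ext; [|exact H].
    apply filter_forall. intros ab x _. apply Rminus_diag_uniq. rewrite cell_integrand_expansion. ring. }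
  refine (RInt_gen_norm (V := R_CompleteNormedModule) _ _ _ _ _ _ Hrem
            (is_RInt_gen_scal _ (r ^ 2) _ HJ)).
  - apply (filter_prod_Rbar_locally_le lo hi m Hlo Hhi).
  - apply filter_forall. intros ab x _. apply cell_rem_dominated; auto.
Qed.

Lemma is_derive_of_quadratic_approx (f : R -> R) f0 D J :
  (forall r, Rabs r <= 1 / 2 -> Rabs (f r - f0 - r * D) <= r ^ 2 * J) ->
  f 0 = f0 /\ is_derive f 0 D.
Proof.
  intro Happrox.
  assert (Hf0 : f 0 = f0).
  { assert (H := Happrox 0 ltac:(rewrite Rabs_R0; lra)).
    replace (f 0 - f0 - 0 * D) with (f 0 - f0) in H by ring.
    replace (0 ^ 2 * J) with 0 in H by ring.
    generalize (Rabs_pos (f 0 - f0)). intro. apply Rminus_diag_uniq, Rabs_eq_0. lra. }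
  split; [exact Hf0|].
  apply is_derive_Reals. intros eps Heps.
  assert (HJ : 0 < Rabs J + 1) by (generalize (Rabs_pos J); lra).
  assert (Hd : 0 < Rmin (1 / 2) (eps / (Rabs J + 1))) by (apply Rmin_pos; [lra | apply Rdiv_lt_0_compat; lra]).
  exists (mkposreal _ Hd). intros h Hh Hhd. simpl in Hhd.
  assert (Hh1 : Rabs h <= 1 / 2) by (generalize (Rmin_l (1 / 2) (eps / (Rabs J + 1))); lra).
  assert (Hh2 : Rabs h * (Rabs J + 1) < eps).
  { apply Rmult_lt_reg_r with (/ (Rabs J + 1)); [apply Rinv_0_lt_compat; lra|].
    replace (Rabs h * (Rabs J + 1) * / (Rabs J + 1)) with (Rabs h) by (field; lra).
    generalize (Rmin_r (1 / 2) (eps / (Rabs J + 1))). unfold Rdiv. lra. }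
  assert (Hpos : 0 < Rabs h) by (apply Rabs_pos_lt; auto).
  rewrite Rplus_0_l, Hf0.
  replace ((f h - f0) / h - D) with ((f h - f0 - h * D) / h) by (field; auto).
  unfold Rdiv. rewrite Rabs_mult, Rabs_inv.
  apply Rmult_lt_reg_r with (Rabs h); auto. rewrite Rmult_assoc, Rinv_l, Rmult_1_r by lra.
  eapply Rle_lt_trans; [apply Happrox, Hh1|]. rewrite <- pow2_abs.
  assert (Rabs h * Rabs h * J <= Rabs h * Rabs h * Rabs J)
    by (apply Rmult_le_compat_l; [apply Rmult_le_pos; apply Rabs_pos | apply Rle_abs]).
  nra.
Qed.

Lemma Pcell_cell_integrand w r i j : -1 < r < 1 ->
  Pcell w r i j = RInt_gen (cell_integrand r (code_lo w j) (code_hi w j))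
                    (Rbar_locally (code_lo w i)) (Rbar_locally (code_hi w i)).
Proof.
  intro Hr. unfold Pcell. f_equal. apply functional_extensionality. intro x.
  apply is_RInt_gen_unique, is_RInt_gen_phi2, Hr.
Qed.

Definition cell_prob (w : R) (i : nat) : R := ncdf_bar (code_hi w i) - ncdf_bar (code_lo w i).
Definition cell_score (w : R) (i : nat) : R := phi_bar (code_lo w i) - phi_bar (code_hi w i).

Lemma code_interval_nonempty w i : 0 < w -> (i <= 3)%nat ->
  exists m : R, Rbar_lt (code_lo w i) m /\ Rbar_lt m (code_hi w i).
Proof.
  intros Hw Hi. destruct i as [|[|[|[|i]]]]; simpl; try lia.
  - exists (- w - 1). simpl; split; auto; lra.
  - exists (- w / 2). simpl; lra.
  - exists (w / 2). simpl; lra.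
  - exists (w + 1). simpl; split; auto; lra.
Qed.

Lemma code_bounds_abs_le w i : 0 < w -> finite_abs_le w (code_lo w i) /\ finite_abs_le w (code_hi w i).
Proof.
  intro Hw. destruct i as [|[|[|[|i]]]]; simpl; split; auto;
    rewrite ?Rabs_Ropp, ?Rabs_R0, ?Rabs_pos_eq; lra.
Qed.

Lemma Pcell_at_0 w i j : 0 < w -> (i <= 3)%nat -> (j <= 3)%nat ->
  Pcell w 0 i j = cell_prob w i * cell_prob w j /\
  Derive (fun r => Pcell w r i j) 0 = cell_score w i * cell_score w j.
Proof.
  intros Hw Hi Hj. destruct (code_interval_nonempty w i Hw Hi) as [m [Hlo Hhi]].
  destruct (code_bounds_abs_le w j Hw) as [Ha Hb].
  destruct (RInt_gen_cell_integrand_approx _ _ _ _ w m Ha Hb ltac:(lra) Hlo Hhi) as [J HJ].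
  destruct (is_derive_of_quadratic_approx _ _ _ J HJ) as [H0 Hd].
  split.
  - rewrite Pcell_cell_integrand, H0 by lra. unfold cell_prob. ring.
  - apply is_derive_unique. eapply is_derive_ext_loc; [|rewrite Rmult_comm; exact Hd].
    assert (Hp : 0 < 1 / 2) by lra. exists (mkposreal _ Hp). intros t Ht.
    symmetry. apply Pcell_cell_integrand.
    change (Rabs (t - 0) < 1 / 2) in Ht. rewrite Rminus_0_r in Ht.
    unfold Rabs in Ht; destruct Rcase_abs in Ht; lra.
Qed.

Lemma sum_f_R0_mul_sum_f_R0 (a b : nat -> R) n m :
  sum_f_R0 (fun i => sum_f_R0 (fun j => a i * b j) m) n = sum_f_R0 a n * sum_f_R0 b m.
Proof.
  induction n as [|n IH]; simpl.
  - rewrite scal_sum. apply sum_eq. intros; ring.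
  - rewrite IH, Rmult_plus_distr_r. f_equal. rewrite scal_sum. apply sum_eq. intros; ring.
Qed.

Lemma ncdf_bounds_pos w : 0 < w -> 1 / 2 < ncdf w < 1.
Proof.
  intro Hw. rewrite <- ncdf_0. split; [apply ncdf_lt, Hw|].
  generalize (ncdf_lt w (w + 1) ltac:(lra)) (ncdf_bounds (w + 1)). lra.
Qed.

Lemma cell_prob_pos w i : 0 < w -> (i <= 3)%nat -> 0 < cell_prob w i.
Proof.
  intros Hw Hi. generalize (ncdf_bounds_pos w Hw). intro.
  unfold cell_prob. destruct i as [|[|[|[|i]]]]; simpl; try lia; rewrite ?ncdf_opp, ?ncdf_0; lra.
Qed.

Definition score_ratio_sum (w : R) : R := sum_f_R0 (fun i => cell_score w i ^ 2 / cell_prob w i) 3.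

Lemma I2_at_0 k w : 0 < w -> I2 k w 0 = INR k * score_ratio_sum w ^ 2.
Proof.
  intro Hw. unfold I2, score_ratio_sum. f_equal. rewrite <- Rsqr_pow2. unfold Rsqr.
  rewrite <- sum_f_R0_mul_sum_f_R0.
  apply sum_eq. intros i Hi. apply sum_eq. intros j Hj.
  destruct (Pcell_at_0 w i j Hw Hi Hj) as [Hp Hd]. rewrite Hp, Hd.
  assert (cell_prob w i <> 0) by (apply Rgt_not_eq, cell_prob_pos; auto).
  assert (cell_prob w j <> 0) by (apply Rgt_not_eq, cell_prob_pos; auto).
  field. auto.
Qed.

Lemma score_ratio_sum_eq w : 0 < w -> score_ratio_sum w = 2 * g w / PI.
Proof.
  intro Hw. destruct (ncdf_bounds_pos w Hw) as [Hlo Hhi]. assert (HPI := PI_RGT_0).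
  assert (Hc : / sqrt (2 * PI) * / sqrt (2 * PI) = / (2 * PI))
    by (rewrite <- Rinv_mult, sqrt_sqrt; [reflexivity | lra]).
  assert (Hg0 : gauss 0 = 1) by (unfold gauss; rewrite <- exp_0; f_equal; field).
  assert (Hsq : exp (- w ^ 2) = gauss w * gauss w) by (rewrite gauss_mul; f_equal; field).
  unfold score_ratio_sum, cell_score, cell_prob, g. cbn [sum_f_R0 code_lo code_hi ncdf_bar phi_bar].
  rewrite !ncdf_opp, ncdf_0, phi_even, Phi_ncdf, !phi_gauss, Hg0, Hsq. fold (gauss w).
  set (c := / sqrt (2 * PI)) in *. set (E := gauss w) in *. set (P := ncdf w) in *.
  transitivity (c * c * (2 * (E ^ 2 / (1 - P) + (1 - E) ^ 2 / (P - 1 / 2)))).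
  - field. repeat split; intro; lra.
  - rewrite Hc. field. repeat split; intro; lra.
Qed.

Lemma I1_at_0 k : I1 k 0 = 4 * INR k / PI ^ 2.
Proof.
  unfold I1. rewrite asin_0. assert (HPI := PI_RGT_0). field. lra.
Qed.

Theorem theorem2 (w : R) (k : nat) (hw : 0 < w) (hk : (0 < k)%nat) :
  Rratio k w 0 = (g w) ^ 2.
Proof.
  unfold Rratio. rewrite I2_at_0, score_ratio_sum_eq, I1_at_0 by exact hw.
  assert (0 < INR k) by (apply lt_0_INR; lia).
  assert (HPI := PI_RGT_0). field. lra.
Qed.
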